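(* Let $\mathcal{L}$ be a compendious logic. Every non-finitary theory $K$ of $\mathcal{L}$ contains a cleaving, i.e., there is a cleaving $\mathcal{C}\subseteq K$.
   Context: A logic $(\mathrm{Fm},\mathrm{Cn})$ (countable $\mathrm{Fm}$) is compendious if it is Tarskian ($\mathrm{Cn}$ monotone, extensive, idempotent), Boolean (has $\neg,\lor$ with $\mathrm{Cn}(\{\varphi\})\cap\mathrm{Cn}(\{\neg\varphi\})=\mathrm{Cn}(\emptyset)$, $\mathrm{Cn}(\{\varphi,\neg\varphi\})=\mathrm{Fm}$, and the usual introduction and elimination rules for $\lor$ relative to $\mathrm{Cn}$), has infinitely many theories ($K=\mathrm{Cn}(K)$), and satisfies (Discerning): for all sets $X,Y$ of complete consistent theories, $\bigcap X=\bigcap Y$ implies $X=Y$. $\varphi\equiv\psi$ iff $\mathrm{Cn}(\{\varphi\})=\mathrm{Cn}(\{\psi\})$. A theory is non-finitary if it contains infinitely many $\equiv$-classes. A cleaving is an infinite set of formulae $\mathcal{C}$ such that for all distinct $\varphi,\psi\in\mathcal{C}$: (CL1) $\varphi\not\equiv\psi$, and (CL2) $\varphi\lor\psi\in\mathrm{Cn}(\emptyset)$. *)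

From Stdlib Require Import List.

Definition set (A : Type) := A -> Prop.

Definition subset {A} (X Y : set A) : Prop := forall a, X a -> Y a.
Definition seteq {A} (X Y : set A) : Prop := forall a, X a <-> Y a.
Definition single {A} (a : A) : set A := fun x => x = a.
Definition pair {A} (a b : A) : set A := fun x => x = a \/ x = b.
Definition union {A} (X Y : set A) : set A := fun x => X x \/ Y x.
Definition emptyset {A} : set A := fun _ => False.
Definition fullset {A} : set A := fun _ => True.

Definition infinite_set {A} (X : set A) : Prop :=
  forall l : list A, exists a, X a /\ ~ In a l.

Section Logic.
Variable Fm : Type.
Variable Cn : set Fm -> set Fm.

Definition countable_type : Prop :=
  exists f : Fm -> nat, forall x y, f x = f y -> x = y.

Definition tarskian : Prop :=
  (forall X Y, subset X Y -> subset (Cn X) (Cn Y)) /\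
  (forall X, subset X (Cn X)) /\
  (forall X, seteq (Cn (Cn X)) (Cn X)).

Definition is_theory (K : set Fm) : Prop := seteq K (Cn K).

Definition boolean (neg : Fm -> Fm) (disj : Fm -> Fm -> Fm) : Prop :=
  (forall phi, seteq (fun x => Cn (single phi) x /\ Cn (single (neg phi)) x)
                     (Cn emptyset)) /\
  (forall phi, seteq (Cn (pair phi (neg phi))) fullset) /\
  (forall phi psi, Cn (single phi) (disj phi psi)) /\
  (forall phi psi, Cn (single psi) (disj phi psi)) /\
  (forall X phi psi chi,
      Cn (union X (single phi)) chi ->
      Cn (union X (single psi)) chi ->
      Cn (union X (single (disj phi psi))) chi).

Definition infinitely_many_theories : Prop :=
  forall l : list (set Fm), exists K, is_theory K /\
    forall X, In X l -> ~ seteq K X.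

Definition complete_consistent_theory (neg : Fm -> Fm) (K : set Fm) : Prop :=
  is_theory K /\ (forall phi, K phi \/ K (neg phi)) /\ ~ seteq K fullset.

(* Intersection of a set of sets (the intersection of the empty family is Fm). *)
Definition bigcap (X : set (set Fm)) : set Fm := fun phi => forall T, X T -> T phi.

Definition familyeq (X Y : set (set Fm)) : Prop :=
  (forall T, X T -> exists T', Y T' /\ seteq T T') /\
  (forall T, Y T -> exists T', X T' /\ seteq T T').

Definition discerning (neg : Fm -> Fm) : Prop :=
  forall X Y : set (set Fm),
    (forall T, X T -> complete_consistent_theory neg T) ->
    (forall T, Y T -> complete_consistent_theory neg T) ->
    seteq (bigcap X) (bigcap Y) -> familyeq X Y.

Definition compendious (neg : Fm -> Fm) (disj : Fm -> Fm -> Fm) : Prop :=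
  countable_type /\ tarskian /\ boolean neg disj /\
  infinitely_many_theories /\ discerning neg.

Definition fequiv (phi psi : Fm) : Prop := seteq (Cn (single phi)) (Cn (single psi)).

Definition non_finitary (K : set Fm) : Prop :=
  forall l : list Fm, exists phi, K phi /\ forall psi, In psi l -> ~ fequiv phi psi.

Definition cleaving (disj : Fm -> Fm -> Fm) (C : set Fm) : Prop :=
  infinite_set C /\
  forall phi psi, C phi -> C psi -> phi <> psi ->
    ~ fequiv phi psi /\ Cn emptyset (disj phi psi).

End Logic.

From Stdlib Require Import List Classical ClassicalEpsilon Arith Lia FinFun.
Import ListNotations.

(* For any e, the map x |-> (x \/ e, x \/ ~e) is injective up to
   equivalence (x is recovered by cases on e), so if an up-closed G is
   non-finitary then so is G restricted to the consequences of e or of ~e.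
   This lets us pick a non-tautology a_0 in K such that K_1, the part of K
   entailed by ~a_0, is still non-finitary; repeating inside K_1, K_2, ...
   gives a_0, a_1, ... with ~a_n |- a_m for n < m.  Hence a_n \/ a_m is a
   tautology (cases on a_n \/ ~a_n), and a_n, a_m are inequivalent (otherwise
   a_n would follow from both a_n and ~a_n). *)

Section Logic.
Variable Fm : Type.
Variable Cn : set Fm -> set Fm.
Variable neg : Fm -> Fm.
Variable disj : Fm -> Fm -> Fm.
Hypothesis Cn_mono : forall X Y, subset X Y -> subset (Cn X) (Cn Y).
Hypothesis Cn_ext : forall X, subset X (Cn X).
Hypothesis Cn_idem : forall X, seteq (Cn (Cn X)) (Cn X).
Hypothesis Cn_neg_common : forall phi,
  seteq (fun x => Cn (single phi) x /\ Cn (single (neg phi)) x) (Cn emptyset).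
Hypothesis Cn_explosion : forall phi, seteq (Cn (pair phi (neg phi))) fullset.
Hypothesis Cn_disjIl : forall phi psi, Cn (single phi) (disj phi psi).
Hypothesis Cn_disjIr : forall phi psi, Cn (single psi) (disj phi psi).
Hypothesis Cn_disjE : forall X phi psi chi,
  Cn (union X (single phi)) chi ->
  Cn (union X (single psi)) chi ->
  Cn (union X (single (disj phi psi))) chi.

Local Notation equiv := (fequiv Fm Cn).
Local Notation non_finitary := (non_finitary Fm Cn).

Definition entails (l : list Fm) (c : Fm) : Prop := Cn (fun x => In x l) c.

Definition tautology (t : Fm) : Prop := Cn emptyset t.

Lemma Cn_trans X Y c : (forall x, X x -> Cn Y x) -> Cn X c -> Cn Y c.
Proof. intros XY Xc. apply (proj1 (Cn_idem Y c)). exact (Cn_mono X (Cn Y) XY c Xc). Qed.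

Lemma entails_in l c : In c l -> entails l c.
Proof. intro lc. exact (Cn_ext _ c lc). Qed.

Lemma entails_weaken l l' c : incl l l' -> entails l c -> entails l' c.
Proof. intro ll'. exact (Cn_mono _ _ ll' c). Qed.

Lemma entails_cut l a c : entails l a -> entails (a :: l) c -> entails l c.
Proof.
  intros la alc. apply Cn_trans with (2 := alc).
  intros x [<- | lx]; [exact la | exact (entails_in l x lx)].
Qed.

Lemma entails_single_single a b : entails [a] b <-> Cn (single a) b.
Proof.
  split; apply Cn_mono.
  - intros x [<- | []]; reflexivity.
  - intros x ->; left; reflexivity.
Qed.

Lemma entails_chain l a b : entails l a -> entails [a] b -> entails l b.
Proof.
  intros la ab. apply (entails_cut l a); [exact la |].
  apply (entails_weaken [a]); [intros x [<- | []]; left; reflexivity | exact ab].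
Qed.

Lemma entails_cases l a b c :
  entails l (disj a b) -> entails (a :: l) c -> entails (b :: l) c -> entails l c.
Proof.
  intros lab ac bc.
  assert (cases : Cn (union (fun x => In x l) (single (disj a b))) c).
  { apply Cn_disjE; [apply Cn_mono with (2 := ac) | apply Cn_mono with (2 := bc)];
      intros x [<- | lx]; solve [right; reflexivity | left; exact lx]. }
  apply Cn_trans with (2 := cases).
  intros x [lx | ->]; [exact (entails_in l x lx) | exact lab].
Qed.

Lemma entails_explosion l a c : entails l a -> entails l (neg a) -> entails l c.
Proof.
  intros la lna. apply Cn_trans with (X := pair a (neg a)).
  - intros x [-> | ->]; assumption.
  - apply (proj2 (Cn_explosion a c)); exact I.
Qed.

Lemma entails_tautology l t : tautology t -> entails l t.
Proof. apply Cn_mono. intros x []. Qed.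

Lemma entails_nil_tautology t : entails [] t -> tautology t.
Proof. apply Cn_mono. intros x []. Qed.

Lemma entails_disjIl l a b : entails l a -> entails l (disj a b).
Proof. intro la. apply (entails_chain l a); [exact la | apply entails_single_single, Cn_disjIl]. Qed.

Lemma entails_disjIr l a b : entails l b -> entails l (disj a b).
Proof. intro lb. apply (entails_chain l b); [exact lb | apply entails_single_single, Cn_disjIr]. Qed.

Lemma tautology_excluded_middle a : tautology (disj a (neg a)).
Proof. apply (proj1 (Cn_neg_common a _)); split; [apply Cn_disjIl | apply Cn_disjIr]. Qed.

Lemma entails_by_cases l a c :
  entails (a :: l) c -> entails (neg a :: l) c -> entails l c.
Proof. apply entails_cases, entails_tautology, tautology_excluded_middle. Qed.

Lemma tautology_disjC a b : tautology (disj a b) -> tautology (disj b a).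
Proof.
  intro ab. apply entails_nil_tautology.
  apply (entails_cases [] a b); [exact (entails_tautology [] _ ab) | |];
    [apply entails_disjIr | apply entails_disjIl]; apply entails_in; left; reflexivity.
Qed.

Lemma fequiv_entails a b : equiv a b -> entails [a] b.
Proof. intro ab. apply entails_single_single, ab, Cn_ext; reflexivity. Qed.

Lemma entails_fequiv a b : entails [a] b -> entails [b] a -> equiv a b.
Proof.
  intros ab ba x; split; apply Cn_trans; intros y ->; apply entails_single_single;
    assumption.
Qed.

Lemma fequiv_refl a : equiv a a.
Proof. intro x; reflexivity. Qed.

Lemma fequiv_sym a b : equiv a b -> equiv b a.
Proof. intros ab x; symmetry; apply ab. Qed.

Lemma fequiv_trans a b c : equiv a b -> equiv b c -> equiv a c.
Proof. intros ab bc x; rewrite (ab x); apply bc. Qed.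

Lemma tautology_fequiv a b : tautology a -> tautology b -> equiv a b.
Proof. intros ta tb; apply entails_fequiv; apply entails_tautology; assumption. Qed.

Definition up_closed (G : set Fm) : Prop := forall x y, G x -> entails [x] y -> G y.

Definition above (e : Fm) : set Fm := fun x => entails [e] x.

Definition setI (G H : set Fm) : set Fm := fun x => G x /\ H x.

Lemma up_closed_setI_above G e : up_closed G -> up_closed (setI G (above e)).
Proof.
  intros upG x y [Gx ex] xy. split; [exact (upG x y Gx xy) | exact (entails_chain _ _ _ ex xy)].
Qed.

Lemma non_finitary_mono G H : subset G H -> non_finitary G -> non_finitary H.
Proof. intros GH nfG l. destruct (nfG l) as [x [Gx lx]]. exists x; auto. Qed.

Lemma finitary_cover G :
  ~ non_finitary G -> exists l, forall x, G x -> exists u, In u l /\ equiv x u.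
Proof.
  intro fin. apply not_all_ex_not in fin as [l fin]. exists l; intros x Gx.
  apply NNPP; intro none. apply fin. exists x; split; [exact Gx |].
  intros u lu xu. apply none; eauto.
Qed.

(* The pair of lists covering A and B yields a finite list of candidates
   covering G, one representative per realized pair of classes. *)
Lemma non_finitary_of_pair_reflect (G A B : set Fm) (f g : Fm -> Fm) :
  (forall x, G x -> A (f x)) -> (forall x, G x -> B (g x)) ->
  (forall x y, G x -> G y -> equiv (f x) (f y) -> equiv (g x) (g y) -> equiv x y) ->
  non_finitary G -> non_finitary A \/ non_finitary B.
Proof.
  intros GA GB reflect nfG. apply NNPP; intros [finA finB]%not_or_and.
  destruct (finitary_cover A finA) as [lA coverA].
  destruct (finitary_cover B finB) as [lB coverB].
  destruct (nfG []) as [x0 _].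
  pose (realizes := fun (p : Fm * Fm) x => G x /\ equiv (f x) (fst p) /\ equiv (g x) (snd p)).
  pose (rep := fun p => epsilon (inhabits x0) (realizes p)).
  destruct (nfG (map rep (list_prod lA lB))) as [x [Gx new]].
  destruct (coverA (f x) (GA x Gx)) as [u [lu fxu]].
  destruct (coverB (g x) (GB x Gx)) as [v [lv gxv]].
  assert (rep_spec : realizes (u, v) (rep (u, v))).
  { apply epsilon_spec. exists x. exact (conj Gx (conj fxu gxv)). }
  destruct rep_spec as [Grep [frep grep]]; simpl in frep, grep.
  apply (new (rep (u, v))); [apply in_map, in_prod; assumption |].
  apply reflect; [exact Gx | exact Grep | |]; eapply fequiv_trans;
    (eassumption || apply fequiv_sym; eassumption).
Qed.

Lemma entails_of_fequiv_disj x y e :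
  equiv (disj x e) (disj y e) -> equiv (disj x (neg e)) (disj y (neg e)) -> entails [x] y.
Proof.
  intros pos negative.
  assert (x_ye : entails [x] (disj y e)).
  { apply (entails_chain _ (disj x e)); [apply entails_disjIl, entails_in; left; reflexivity |].
    apply fequiv_entails, pos. }
  assert (x_yne : entails [x] (disj y (neg e))).
  { apply (entails_chain _ (disj x (neg e))); [apply entails_disjIl, entails_in; left; reflexivity |].
    apply fequiv_entails, negative. }
  apply (entails_cases _ y e _ x_ye); [apply entails_in; left; reflexivity |].
  apply (entails_cases _ y (neg e)).
  - apply (entails_weaken [x]); [intros z [<- | []]; right; left; reflexivity | exact x_yne].
  - apply entails_in; left; reflexivity.
  - apply (entails_explosion _ e); apply entails_in; simpl; auto.
Qed.

Lemma non_finitary_split G e :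
  up_closed G -> non_finitary G ->
  non_finitary (setI G (above e)) \/ non_finitary (setI G (above (neg e))).
Proof.
  intro upG. apply (non_finitary_of_pair_reflect G _ _ (fun x => disj x e) (fun x => disj x (neg e))).
  - intros x Gx; split; [apply (upG x) | apply entails_disjIr];
      [exact Gx | apply entails_disjIl |]; apply entails_in; left; reflexivity.
  - intros x Gx; split; [apply (upG x) | apply entails_disjIr];
      [exact Gx | apply entails_disjIl |]; apply entails_in; left; reflexivity.
  - intros x y _ _ fxy gxy. apply entails_fequiv; apply entails_of_fequiv_disj with e;
      assumption || (apply fequiv_sym; assumption).
Qed.

Definition refinable (G : set Fm) (a : Fm) : Prop :=
  G a /\ ~ tautology a /\ non_finitary (setI G (above (neg a))).

Lemma non_tautology_of_not_fequiv z t : tautology t -> ~ equiv z t -> ~ tautology z.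
Proof. intros taut_t zt tz. exact (zt (tautology_fequiv z t tz taut_t)). Qed.

(* If refining by ~e loses non-finitarity, then refining by e keeps it; inside
   that part pick a further e' inequivalent to e, and either e' or e \/ ~e'
   works. *)
Lemma refinable_exists G : up_closed G -> non_finitary G -> exists a, refinable G a.
Proof.
  intros upG nfG. destruct (nfG []) as [x0 _].
  pose (t := disj x0 (neg x0)).
  assert (taut_t : tautology t) by apply tautology_excluded_middle.
  destruct (nfG [t]) as [e [Ge et]].
  assert (ne : ~ tautology e)
    by (apply (non_tautology_of_not_fequiv e t taut_t), et; left; reflexivity).
  destruct (classic (non_finitary (setI G (above (neg e))))) as [nfne | finne].
  { exists e; repeat split; assumption. }
  assert (nfe : non_finitary (setI G (above e)))
    by (destruct (non_finitary_split G e upG nfG); tauto).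
  destruct (nfe [e; t]) as [e' [[Ge' ee'] e'new]].
  assert (e'e : ~ equiv e' e) by (apply e'new; left; reflexivity).
  assert (ne' : ~ tautology e')
    by (apply (non_tautology_of_not_fequiv e' t taut_t), e'new; right; left; reflexivity).
  destruct (non_finitary_split _ e' (up_closed_setI_above G e upG) nfe) as [nf | nf].
  - exists (disj e (neg e')); repeat split.
    + apply (upG e); [exact Ge | apply entails_disjIl, entails_in; left; reflexivity].
    + intro taut. apply e'e, entails_fequiv; [| exact ee'].
      apply (entails_cases _ e (neg e')); [exact (entails_tautology _ _ taut) | |].
      * apply entails_in; left; reflexivity.
      * apply (entails_explosion _ e'); apply entails_in; simpl; auto.
    + apply non_finitary_mono with (2 := nf). intros x [[Gx _] e'x]; split; [exact Gx |].
      apply (entails_chain _ e' _); [| exact e'x].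
      apply (entails_by_cases _ e'); [apply entails_in; left; reflexivity |].
      apply (entails_explosion _ (disj e (neg e')));
        [apply entails_disjIr | ]; apply entails_in; simpl; auto.
  - exists e'; repeat split; [exact Ge' | exact ne' |].
    apply non_finitary_mono with (2 := nf). intros x [[Gx _] ne'x]; split; assumption.
Qed.

Lemma infinite_set_range_injective {A} (a : nat -> A) :
  (forall i j, a i = a j -> i = j) -> infinite_set (fun x => exists n, x = a n).
Proof.
  intros inj l. apply NNPP; intro covered.
  assert (all_in : forall i, In (a i) l).
  { intro i. apply NNPP; intro out. apply covered. exists (a i); eauto. }
  assert (nodup : NoDup (map a (seq 0 (S (length l)))))
    by (apply Injective_map_NoDup; [exact inj | apply seq_NoDup]).
  apply NoDup_incl_length with (l' := l) in nodup.
  - rewrite length_map, length_seq in nodup. lia.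
  - intros z [i [<- _]]%in_map_iff. apply all_in.
Qed.

Section Chain.
Variable K : set Fm.
Hypothesis K_up : up_closed K.
Hypothesis K_nf : non_finitary K.

Lemma Fm_inhabited : inhabited Fm.
Proof. destruct (K_nf []) as [x _]. exact (inhabits x). Qed.

Definition pick (G : set Fm) : Fm := epsilon Fm_inhabited (refinable G).

Fixpoint region (n : nat) : set Fm :=
  match n with
  | 0 => K
  | S n => setI (region n) (above (neg (pick (region n))))
  end.

Definition cut (n : nat) : Fm := pick (region n).

Lemma pick_refinable G : up_closed G -> non_finitary G -> refinable G (pick G).
Proof. intros up nf. unfold pick. apply epsilon_spec, refinable_exists; assumption. Qed.

Lemma region_spec n : up_closed (region n) /\ non_finitary (region n).
Proof.
  induction n as [| n [up nf]]; [split; assumption |].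
  destruct (pick_refinable _ up nf) as [_ [_ nf']].
  split; [apply up_closed_setI_above, up | exact nf'].
Qed.

Lemma cut_refinable n : refinable (region n) (cut n).
Proof. destruct (region_spec n). apply pick_refinable; assumption. Qed.

Lemma region_antitone n m : n <= m -> subset (region m) (region n).
Proof. induction 1; [intros x; trivial | intros x [rx _]; auto]. Qed.

Lemma neg_cut_entails_cut n m : n < m -> entails [neg (cut n)] (cut m).
Proof.
  intro lt. destruct (cut_refinable m) as [rm _].
  exact (proj2 (region_antitone (S n) m lt _ rm)).
Qed.

Lemma cut_separated_lt n m :
  n < m -> ~ equiv (cut n) (cut m) /\ tautology (disj (cut n) (cut m)).
Proof.
  intro lt. pose proof (neg_cut_entails_cut n m lt) as nm.
  split.
  - intro eqv. destruct (cut_refinable n) as [_ [ntaut _]]. apply ntaut, entails_nil_tautology.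
    apply (entails_by_cases _ (cut n)); [apply entails_in; left; reflexivity |].
    apply (entails_chain _ (cut m) _ nm), fequiv_entails, fequiv_sym, eqv.
  - apply entails_nil_tautology, (entails_by_cases _ (cut n));
      [apply entails_disjIl, entails_in; left; reflexivity | apply entails_disjIr, nm].
Qed.

Lemma cut_separated n m :
  n <> m -> ~ equiv (cut n) (cut m) /\ tautology (disj (cut n) (cut m)).
Proof.
  intro neq. destruct (proj1 (Nat.lt_gt_cases n m) neq) as [lt | gt];
    [exact (cut_separated_lt n m lt) |].
  destruct (cut_separated_lt m n gt) as [ne taut].
  split; [intro eqv; exact (ne (fequiv_sym _ _ eqv)) | exact (tautology_disjC _ _ taut)].
Qed.

Lemma cut_injective i j : cut i = cut j -> i = j.
Proof.
  intro eq. destruct (Nat.eq_dec i j) as [| neq]; [assumption | exfalso].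
  apply (proj1 (cut_separated i j neq)). rewrite eq. apply fequiv_refl.
Qed.

Lemma cleaving_cuts :
  cleaving Fm Cn disj (fun x => exists n, x = cut n) /\
  subset (fun x => exists n, x = cut n) K.
Proof.
  split; [split |].
  - exact (infinite_set_range_injective cut cut_injective).
  - intros phi psi [n ->] [m ->] neq. apply cut_separated. intros ->. exact (neq eq_refl).
  - intros x [n ->]. destruct (cut_refinable n) as [rn _].
    exact (region_antitone 0 n (Nat.le_0_l n) _ rn).
Qed.

End Chain.

End Logic.

Theorem mainTheorem6 (Fm : Type) (Cn : set Fm -> set Fm)
  (neg : Fm -> Fm) (disj : Fm -> Fm -> Fm) :
  compendious Fm Cn neg disj ->
  forall K : set Fm, is_theory Fm Cn K -> non_finitary Fm Cn K ->
  exists C : set Fm, cleaving Fm Cn disj C /\ subset C K.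
Proof.
  intros [_ [[mono [ext idem]] [[common [expl [disjIl [disjIr disjE]]]] _]]] K thK nfK.
  assert (K_up : up_closed Fm Cn K).
  { intros x y Kx xy. apply (proj2 (thK y)).
    apply mono with (2 := xy). intros z [<- | []]; exact Kx. }
  eexists; exact (cleaving_cuts Fm Cn neg disj mono ext idem common expl
                    disjIl disjIr disjE K K_up nfK).
Qed.
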